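(* Let $(X,\tau)$ be a topological space, $\delta$ a quasi-proximity on $X$ compatible with $\tau$ such that $\mathcal{V}_\delta$ is transitive, and $\mathcal{B}=\mathcal{B}(\mathcal{V}_\delta)$. Let $\{U_i:i\in I\}$ be a nonempty family of transitive relations on $X$ containing the diagonal, closed under finite intersections, and let $\mathcal{V}$ be the filter on $X\times X$ generated by $\mathcal{V}_\delta\cup\{U_i:i\in I\}$. Then $\mathcal{V}\in\pi(\delta)$ if and only if $U_i(A)\in\mathcal{B}$ for every $i\in I$ and every $A\subseteq X$.
   Context: Quasi-uniformities and quasi-proximities are in the sense of Fletcher–Lindgren; $\delta$ compatible with $\tau$ means $\tau(\delta)=\tau$. For a quasi-proximity $\delta$, $\pi(\delta)$ is the set of quasi-uniformities $\mathcal{V}$ with $\delta(\mathcal{V})=\delta$, and $\mathcal{V}_\delta$ is its coarsest element (totally bounded). A quasi-uniformity is transitive if it has a base of transitive entourages. For $U\subseteq X\times X$, $U(x)=\{y:(x,y)\in U\}$ and $U(A)=\bigcup_{a\in A}U(a)$. For $N\subseteq X$, $U_N=(N\times N)\cup((X\setminus N)\times X)$, and $\mathcal{B}(\mathcal{W})=\{N\in\tau:U_N\in\mathcal{W}\}$; for $\mathcal{W}=\mathcal{V}_\delta$ transitive this is an l-base (a base of $\tau$ closed under finite unions and intersections containing $\emptyset,X$). *)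

From Stdlib Require Import List Classical FunctionalExtensionality PropExtensionality.
Import ListNotations.
Set Implicit Arguments.

Section QP.
Variable X : Type.

Definition set := X -> Prop.
Definition rel := X -> X -> Prop.

Definition setU (A B : set) : set := fun x => A x \/ B x.
Definition setC (A : set) : set := fun x => ~ A x.

Definition is_topology (tau : set -> Prop) : Prop :=
  tau (fun _ => True) /\ tau (fun _ => False) /\
  (forall G H, tau G -> tau H -> tau (fun x => G x /\ H x)) /\
  (forall F : set -> Prop, (forall G, F G -> tau G) ->
      tau (fun x => exists G, F G /\ G x)).

Definition is_qproximity (delta : set -> set -> Prop) : Prop :=
  (forall A B C, delta A (setU B C) <-> delta A B \/ delta A C) /\
  (forall A B C, delta (setU A B) C <-> delta A C \/ delta B C) /\
  (forall A B, delta A B -> (exists a, A a) /\ (exists b, B b)) /\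
  (forall A B, (exists x, A x /\ B x) -> delta A B) /\
  (forall A B, ~ delta A B ->
     exists C, ~ delta A C /\ ~ delta (setC C) B).

Definition tau_of (delta : set -> set -> Prop) (G : set) : Prop :=
  forall x, G x -> ~ delta (fun y => y = x) (setC G).

Definition compatible (delta : set -> set -> Prop) (tau : set -> Prop) : Prop :=
  forall G, tau G <-> tau_of delta G.

Definition transitive_rel (U : rel) : Prop :=
  forall x y z, U x y -> U y z -> U x z.

Definition contains_diag (U : rel) : Prop := forall x, U x x.

Definition is_qunif (W : rel -> Prop) : Prop :=
  W (fun _ _ => True) /\
  (forall U V, W U -> (forall x y, U x y -> V x y) -> W V) /\
  (forall U V, W U -> W V -> W (fun x y => U x y /\ V x y)) /\
  (forall U, W U -> contains_diag U) /\
  (forall U, W U -> exists V, W V /\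
       forall x y z, V x y -> V y z -> U x z).

Definition transitive_qunif (W : rel -> Prop) : Prop :=
  forall U, W U -> exists T, W T /\ transitive_rel T /\
     forall x y, T x y -> U x y.

Definition img (U : rel) (A : set) : set :=
  fun y => exists a, A a /\ U a y.

Definition delta_of (W : rel -> Prop) (A B : set) : Prop :=
  forall U, W U -> exists b, B b /\ img U A b.

Definition in_pi (delta : set -> set -> Prop) (W : rel -> Prop) : Prop :=
  is_qunif W /\ forall A B, delta_of W A B <-> delta A B.

Definition gen_filter (S : rel -> Prop) (R : rel) : Prop :=
  exists l : list rel, Forall S l /\
    forall x y, (forall U, In U l -> U x y) -> R x y.

Definition V_delta_subbase (delta : set -> set -> Prop) (U : rel) : Prop :=
  exists A B, ~ delta A B /\ forall x y, U x y <-> (~ A x \/ ~ B y).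

(* V_delta: the coarsest (totally bounded) member of pi(delta). *)
Definition V_delta (delta : set -> set -> Prop) : rel -> Prop :=
  gen_filter (V_delta_subbase delta).

Definition U_N (N : set) : rel := fun x y => (N x /\ N y) \/ ~ N x.

Definition Bcal (tau : set -> Prop) (W : rel -> Prop) (N : set) : Prop :=
  tau N /\ W (U_N N).

End QP.

From Stdlib Require Import List Classical FunctionalExtensionality PropExtensionality.
Import ListNotations.
Set Implicit Arguments.

(* If V is in pi(delta) and U_i belongs to V, then N = U_i(A) is U_i-closed,
   so U_i witnesses that N is delta-far from its complement; such an N is
   open and U_N is a subbasic entourage of V_delta.  Conversely, the filter
   generated by V_delta and the U_i has a transitive base and is finer than
   V_delta, so it only remains to show that delta-near sets A, B are joined
   by an edge of every V /\ U_k with V in V_delta.  A U_k-edge exists because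
   U_k(A) is far from its complement; the finitely many subbasic entourages
   below V are then satisfied one at a time by splitting A and B along the
   far pair defining each of them, which preserves nearness. *)

Lemma set_ext {X : Type} (A B : set X) : (forall x, A x <-> B x) -> A = B.
Proof. intros H; extensionality x; apply propositional_extensionality; auto. Qed.

Section QuasiProximity.
Variables (X : Type) (delta : set X -> set X -> Prop).
Hypothesis Hq : is_qproximity delta.

Lemma qprox_monor A B B' : delta A B -> (forall x, B x -> B' x) -> delta A B'.
Proof.
  intros HAB HBB'.
  replace B' with (setU B B') by (apply set_ext; unfold setU; firstorder).
  apply (proj1 Hq); auto.
Qed.

Lemma qprox_monol A A' B : delta A B -> (forall x, A x -> A' x) -> delta A' B.
Proof.
  intros HAB HAA'.
  replace A' with (setU A A') by (apply set_ext; unfold setU; firstorder).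
  apply (proj1 (proj2 Hq)); auto.
Qed.

Lemma qprox_splitr A B (C : set X) : delta A B ->
  delta A (fun x => B x /\ C x) \/ delta A (fun x => B x /\ ~ C x).
Proof.
  intros HAB; apply (proj1 Hq).
  replace (setU _ _) with B; [exact HAB|].
  apply set_ext; intro x; unfold setU; destruct (classic (C x)); tauto.
Qed.

Lemma qprox_splitl A B (C : set X) : delta A B ->
  delta (fun x => A x /\ C x) B \/ delta (fun x => A x /\ ~ C x) B.
Proof.
  intros HAB; apply (proj1 (proj2 Hq)).
  replace (setU _ _) with A; [exact HAB|].
  apply set_ext; intro x; unfold setU; destruct (classic (C x)); tauto.
Qed.

Lemma qprox_nonempty A B : delta A B -> (exists a, A a) /\ (exists b, B b).
Proof. apply (proj1 (proj2 (proj2 Hq))). Qed.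

Lemma qprox_far_disjoint A B x : ~ delta A B -> A x -> ~ B x.
Proof. intros HAB HA HB; apply HAB, (proj1 (proj2 (proj2 (proj2 Hq)))); eauto. Qed.

Lemma V_delta_subbase_diag U : V_delta_subbase delta U -> contains_diag U.
Proof.
  intros [A [B [HAB HU]]] x; apply HU.
  destruct (classic (A x)) as [HA|HA]; [right | left]; eauto using qprox_far_disjoint.
Qed.

Definition joins_near (P : rel X) : Prop :=
  forall A B, delta A B -> exists a b, A a /\ B b /\ P a b.

Lemma joins_near_full : joins_near (fun _ _ => True).
Proof.
  intros A B HAB.
  destruct (qprox_nonempty HAB) as [[a Ha] [b Hb]]; eauto.
Qed.

Lemma joins_near_mono (P Q : rel X) :
  (forall a b, P a b -> Q a b) -> joins_near P -> joins_near Q.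
Proof.
  intros HPQ HP A B HAB; destruct (HP A B HAB) as [a [b [? [? ?]]]].
  exists a, b; auto.
Qed.

Lemma joins_near_subbase U P : V_delta_subbase delta U -> joins_near P ->
  joins_near (fun a b => U a b /\ P a b).
Proof.
  intros [A1 [B1 [Hfar HU]]] HP A B HAB.
  destruct (qprox_splitl A1 HAB) as [HA1|HnA1].
  - destruct (qprox_splitr B1 HA1) as [HB1|HnB1].
    + exfalso; apply Hfar.
      apply (qprox_monol A1 (qprox_monor B1 HB1 (fun x Hx => proj2 Hx))).
      intros x Hx; apply Hx.
    + destruct (HP _ _ HnB1) as [a [b [[Ha _] [[Hb Hnb] HPab]]]].
      exists a, b; repeat split; auto; apply HU; auto.
  - destruct (HP _ _ HnA1) as [a [b [[Ha Hna] [Hb HPab]]]].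
    exists a, b; repeat split; auto; apply HU; auto.
Qed.

Lemma joins_near_V_delta V P : V_delta delta V -> joins_near P ->
  joins_near (fun a b => V a b /\ P a b).
Proof.
  intros [l [Hl HV]] HP.
  apply (joins_near_mono (P := fun a b => (forall U, In U l -> U a b) /\ P a b)).
  { intros a b [Hl' HPab]; auto. }
  clear V HV; induction Hl as [|U l HU Hl IH].
  - apply (joins_near_mono (P := P)); [intros a b HPab; split; [intros _ []|]|]; auto.
  - apply (joins_near_mono
             (P := fun a b => U a b /\ ((forall W, In W l -> W a b) /\ P a b))).
    + intros a b [HUab [Hl' HPab]]; split; auto.
      intros W [<-|HW]; [exact HUab | exact (Hl' W HW)].
    + apply joins_near_subbase; auto.
Qed.

Lemma delta_of_V_delta A B : delta_of (V_delta delta) A B <-> delta A B.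
Proof.
  split.
  - intros H; apply NNPP; intros Hfar.
    destruct (H (fun x y => ~ A x \/ ~ B y)) as [b [Hb [a [Ha [Hna|Hnb]]]]];
      try contradiction.
    exists [fun x y => ~ A x \/ ~ B y]; split.
    + repeat constructor; exists A, B; split; tauto.
    + intros x y Hxy; apply Hxy; left; reflexivity.
  - intros HAB V HV.
    destruct (joins_near_V_delta HV joins_near_full HAB) as [a [b [Ha [Hb [HVab _]]]]].
    exists b; split; auto; exists a; auto.
Qed.

Lemma U_N_far_complement N : ~ delta N (setC N) -> V_delta delta (U_N N).
Proof.
  intros Hfar; exists [U_N N]; split.
  - repeat constructor; exists N, (setC N); split; auto.
    intros x y; unfold U_N, setC; destruct (classic (N y)); tauto.
  - intros x y Hxy; apply Hxy; left; reflexivity.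
Qed.

Lemma tau_of_far_complement N : ~ delta N (setC N) -> tau_of delta N.
Proof.
  intros Hfar x Hx Hnear; apply Hfar.
  apply (qprox_monol N Hnear); intros y ->; exact Hx.
Qed.

Lemma joins_near_of_U_N U : contains_diag U ->
  (forall A, V_delta delta (U_N (img U A))) -> joins_near U.
Proof.
  intros Hdiag HUN A B HAB.
  destruct (qprox_splitr (img U A) HAB) as [Hin|Hout].
  - destruct (qprox_nonempty Hin) as [_ [b [Hb [a [Ha HUab]]]]].
    exists a, b; auto.
  - exfalso.
    destruct (proj2 (delta_of_V_delta _ _) Hout _ (HUN A))
      as [b [[_ Hnb] [a [Ha HUNab]]]].
    assert (HNa : img U A a) by (exists a; auto).
    destruct HUNab as [[_ HNb]|]; auto.
Qed.

End QuasiProximity.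

Lemma img_transitive_far_complement {X : Type} (delta : set X -> set X -> Prop)
  (W : rel X -> Prop) (U : rel X) (A : set X) :
  in_pi delta W -> W U -> transitive_rel U ->
  ~ delta (img U A) (setC (img U A)).
Proof.
  intros [_ Hpi] HU Htr Hnear.
  destruct (proj2 (Hpi _ _) Hnear U HU) as [b [Hnb [a [[a0 [Ha0 HUa0a]] HUab]]]].
  apply Hnb; exists a0; split; [exact Ha0 | exact (Htr _ _ _ HUa0a HUab)].
Qed.

Lemma Bcal_img_transitive {X : Type} (tau : set X -> Prop)
  (delta : set X -> set X -> Prop) (W : rel X -> Prop) (U : rel X) (A : set X) :
  is_qproximity delta -> compatible delta tau ->
  in_pi delta W -> W U -> transitive_rel U ->
  Bcal tau (V_delta delta) (img U A).
Proof.
  intros Hq Hcomp Hpi HU Htr.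
  pose proof (img_transitive_far_complement A Hpi HU Htr) as Hfar.
  split; [apply Hcomp, tau_of_far_complement | apply U_N_far_complement]; auto.
Qed.

Lemma transitive_rel_meet {X : Type} (U V : rel X) :
  transitive_rel U -> transitive_rel V -> transitive_rel (fun x y => U x y /\ V x y).
Proof. intros HU HV x y z [? ?] [? ?]; split; [eapply HU | eapply HV]; eauto. Qed.

Lemma transitive_qunif_sqrt {X : Type} (W : rel X -> Prop) U :
  transitive_qunif W -> W U ->
  exists V, W V /\ forall x y z, V x y -> V y z -> U x z.
Proof.
  intros Htr HU; destruct (Htr U HU) as [T [HT [HTt HTU]]].
  exists T; split; eauto.
Qed.

Section GeneratedFilter.
Variables (X : Type) (S : rel X -> Prop).

Lemma gen_filter_sub R : S R -> gen_filter S R.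
Proof.
  intros HR; exists [R]; split; [repeat constructor; auto|].
  intros x y H; apply H; left; reflexivity.
Qed.

Lemma gen_filter_full : gen_filter S (fun _ _ => True).
Proof. exists []; split; [constructor | auto]. Qed.

Lemma gen_filter_meet U V :
  gen_filter S U -> gen_filter S V -> gen_filter S (fun x y => U x y /\ V x y).
Proof.
  intros [l1 [H1 HU]] [l2 [H2 HV]]; exists (l1 ++ l2); split.
  - apply Forall_app; auto.
  - intros x y H; split; [apply HU | apply HV]; intros W HW; apply H, in_or_app; auto.
Qed.

Lemma gen_filter_diag U :
  (forall R, S R -> contains_diag R) -> gen_filter S U -> contains_diag U.
Proof.
  intros HS [l [Hl HU]] x; apply HU; intros R HR.
  apply HS; rewrite Forall_forall in Hl; auto.
Qed.

Hypothesis S_transitive_base : forall R, S R ->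
  exists T, gen_filter S T /\ transitive_rel T /\ forall x y, T x y -> R x y.

Lemma gen_filter_transitive : transitive_qunif (gen_filter S).
Proof.
  intros R [l [Hl HR]]; revert R HR.
  induction Hl as [|R0 l HR0 Hl IH]; intros R HR.
  - exists (fun _ _ => True); split; [apply gen_filter_full|].
    split; [intros x y z _ _; trivial | intros x y _; apply HR; intros ? []].
  - destruct (S_transitive_base HR0) as [T0 [HT0 [HT0t HT0R]]].
    destruct (IH (fun x y => forall W, In W l -> W x y)) as [T [HT [HTt HTl]]]; auto.
    exists (fun x y => T0 x y /\ T x y); split; [apply gen_filter_meet; auto|].
    split; [apply transitive_rel_meet; auto|].
    intros x y [HT0xy HTxy]; apply HR; intros W [<-|HW].
    + exact (HT0R x y HT0xy).
    + exact (HTl x y HTxy W HW).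
Qed.

Lemma gen_filter_is_qunif :
  (forall R, S R -> contains_diag R) -> is_qunif (gen_filter S).
Proof.
  intros Hdiag; repeat split.
  - apply gen_filter_full.
  - intros U V [l [Hl HU]] HUV; exists l; auto.
  - apply gen_filter_meet.
  - intros U; apply gen_filter_diag; auto.
  - intros U HU; apply transitive_qunif_sqrt; auto using gen_filter_transitive.
Qed.

End GeneratedFilter.

Lemma gen_filter_union_family {X I : Type} (W : rel X -> Prop) (Ufam : I -> rel X) R :
  W (fun _ _ => True) ->
  (forall U V, W U -> W V -> W (fun x y => U x y /\ V x y)) ->
  inhabited I ->
  (forall i j, exists k, forall x y, Ufam k x y <-> (Ufam i x y /\ Ufam j x y)) ->
  gen_filter (fun R => W R \/ exists i, R = Ufam i) R ->
  exists V k, W V /\ forall x y, V x y -> Ufam k x y -> R x y.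
Proof.
  intros Hfull Hmeet [i0] Hdir [l [Hl HR]]; revert R HR.
  induction Hl as [|R0 l HR0 Hl IH]; intros R HR.
  { exists (fun _ _ => True), i0; split; auto; intros x y _ _; apply HR; intros ? []. }
  destruct (IH (fun x y => forall U, In U l -> U x y)) as [V [k [HV HVk]]]; auto.
  destruct HR0 as [HR0 | [i ->]].
  - exists (fun x y => R0 x y /\ V x y), k; split; auto.
    intros x y [HR0xy HVxy] Hk; apply HR; intros U [<-|HU]; auto; apply HVk; auto.
  - destruct (Hdir i k) as [k' Hk']; exists V, k'; split; auto.
    intros x y HVxy Hk'xy; apply Hk' in Hk'xy as [Hi Hk].
    apply HR; intros U [<-|HU]; auto; apply HVk; auto.
Qed.

Theorem proposition2p4 (X : Type) (tau : set X -> Prop)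
  (delta : set X -> set X -> Prop)
  (I : Type) (Ufam : I -> rel X) :
  is_topology tau ->
  is_qproximity delta ->
  compatible delta tau ->
  transitive_qunif (V_delta delta) ->
  inhabited I ->
  (forall i, transitive_rel (Ufam i)) ->
  (forall i, contains_diag (Ufam i)) ->
  (forall i j, exists k, forall x y,
       Ufam k x y <-> (Ufam i x y /\ Ufam j x y)) ->
  (in_pi delta
     (gen_filter (fun R => V_delta delta R \/ exists i, R = Ufam i))
   <->
   (forall (i : I) (A : set X), Bcal tau (V_delta delta) (img (Ufam i) A))).
Proof.
  intros _ Hq Hcomp Htr HI Utr Udiag Udir.
  split.
  - intros Hpi i A.
    apply (Bcal_img_transitive A Hq Hcomp Hpi); [apply gen_filter_sub; eauto | apply Utr].
  - intros HB; split.
    + apply gen_filter_is_qunif.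
      * intros R [HR | [i ->]].
        -- destruct (Htr R HR) as [T [HT HTR]].
           exists T; split; auto; apply gen_filter_sub; auto.
        -- exists (Ufam i); repeat split; auto; apply gen_filter_sub; eauto.
      * intros R [HR | [i ->]]; auto.
        apply (gen_filter_diag (V_delta_subbase_diag Hq) HR).
    + intros A B; split.
      * intros H; apply (delta_of_V_delta Hq); intros U HU.
        apply H, gen_filter_sub; auto.
      * intros HAB R HR.
        destruct (gen_filter_union_family (V_delta delta) Ufam (gen_filter_full _)
                    (@gen_filter_meet _ _) HI Udir HR) as [V [k [HV HVk]]].
        assert (Hk : joins_near delta (Ufam k))
          by (apply (joins_near_of_U_N Hq (Udiag k)); intro; apply HB).
        destruct (joins_near_V_delta Hq HV Hk A B HAB) as [a [b [Ha [Hb [HVab Hkab]]]]].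
        exists b; split; auto; exists a; auto.
Qed.
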